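(* Let $\mathcal{E}$ be an equivalence class of words under $\sim$. Then (i) all words in $\mathcal{E}$ have the same length, and (ii) $\mathcal{E}$ is finite.
   Context: $\mathcal{A}$ is the free associative $\mathbb{C}$-algebra on noncommuting generators $L,R$; words are finite products of these letters. A word is balanced if it contains equally many $L$'s and $R$'s. $\mathcal{J}$ is the two-sided ideal generated by $\{FG-GF : F,G \text{ nonempty balanced words}\}$, and for words $X,Y$, $X\sim Y$ means $X-Y\in\mathcal{J}$. *)

From HB Require Import structures.
From mathcomp Require Import all_boot all_order all_algebra.
From mathcomp Require Import complex.
From mathcomp Require Import Rstruct.
Set Implicit Arguments. Unset Strict Implicit. Unset Printing Implicit Defensive.
Import Order.TTheory GRing.Theory Num.Theory.
Local Open Scope ring_scope.

Definition CC : Type := complex Rdefinitions.R.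

(* Words in the letters L (= true) and R (= false). *)
Definition word := seq bool.

Definition balanced (w : word) : bool := count id w == count negb w.

(* We work in the ambient space of all functions
   word -> CC (formal series) with concatenation-convolution product; the
   free algebra A is the subspace of finitely supported functions. *)
Definition alg := word -> CC.

Definition finsupp (f : alg) : Prop :=
  exists s : seq word, forall w, w \notin s -> f w = 0.

Definition mono (X : word) : alg := fun w => (w == X)%:R.

Definition aadd (f g : alg) : alg := fun w => f w + g w.
Definition asub (f g : alg) : alg := fun w => f w - g w.

Definition amul (f g : alg) : alg :=
  fun w => \sum_(i < (size w).+1) f (take i w) * g (drop i w).

(* J: the two-sided ideal of A generated by FG - GF, F, G nonempty balanced
   words; i.e. the smallest subset of A containing the generators, 0, closed
   under addition and under left/right multiplication by elements of A. *)
Inductive inJ : alg -> Prop :=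
| J_gen (F G : word) : F != [::] -> G != [::] -> balanced F -> balanced G ->
    inJ (asub (amul (mono F) (mono G)) (amul (mono G) (mono F)))
| J_zero : inJ (fun _ => 0)
| J_add (f g : alg) : inJ f -> inJ g -> inJ (aadd f g)
| J_mull (a f : alg) : finsupp a -> inJ f -> inJ (amul a f)
| J_mulr (f a : alg) : finsupp a -> inJ f -> inJ (amul f a)
| J_ext (f g : alg) : inJ f -> (forall w, f w = g w) -> inJ g.

Definition sim (X Y : word) : Prop := inJ (asub (mono X) (mono Y)).

(* Summing the coefficients of the words of length n is a linear functional
   S_n on formal series with S_n(ab) = \sum_i S_i(a) S_(n-i)(b).  Over the
   commutative field C this convolution is symmetric in a and b, so S_n kills
   every commutator ab - ba and hence, being linear and compatible with
   multiplication, the whole ideal J.  If X ~ Y then S_|X|(X - Y) = 0 forces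
   |Y| = |X|, and the class of X lies among the finitely many words of
   length |X|. *)
From mathcomp Require Import all_boot all_algebra complex Rstruct.
Set Implicit Arguments. Unset Strict Implicit. Unset Printing Implicit Defensive.
Import GRing.Theory.

Fixpoint words (n : nat) : seq word :=
  if n is m.+1 then map (cons true) (words m) ++ map (cons false) (words m)
  else [:: [::]].

Lemma mem_words n w : (w \in words n) = (size w == n).
Proof.
apply/idP/eqP => [|<-].
  elim: n w => [|n IH] w /=; first by rewrite inE => /eqP ->.
  by rewrite mem_cat => /orP [] /mapP [u /IH <- ->].
elim: w => [|[] w IH] /=; first by rewrite inE.
  by rewrite mem_cat map_f.
by rewrite mem_cat orbC map_f.
Qed.

Local Open Scope ring_scope.

Lemma big_words_split (V : nmodType) (h : word -> word -> V) i n : (i <= n)%N ->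
  \sum_(w <- words n) h (take i w) (drop i w) =
  \sum_(u <- words i) \sum_(v <- words (n - i)) h u v.
Proof.
elim: i n h => [|i IH] n h le_in.
  by rewrite big_cons big_nil addr0 subn0; apply: eq_bigr => w _; rewrite take0 drop0.
case: n le_in => [//|n] le_in /=.
rewrite !big_cat !big_map /= subSS.
by rewrite (IH n (fun u v => h (true :: u) v)) // (IH n (fun u v => h (false :: u) v)).
Qed.

Definition degsum n (f : alg) : CC := \sum_(w <- words n) f w.

Lemma degsumD n f g : degsum n (aadd f g) = degsum n f + degsum n g.
Proof. exact: big_split. Qed.

Lemma degsumB n f g : degsum n (asub f g) = degsum n f - degsum n g.
Proof. exact: sumrB. Qed.

Lemma degsum_mono n X : degsum n (mono X) = (size X == n)%:R.
Proof.
rewrite /degsum /mono; elim: n X => [|n IH] X /=.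
  by rewrite big_cons big_nil addr0; case: X.
rewrite big_cat !big_map /=; case: X => [|[] X] /=.
- by rewrite !big1 ?addr0.
- by rewrite [X in _ + X]big1 ?addr0 // IH.
- by rewrite big1 ?add0r // IH.
Qed.

Lemma degsum_amul n a b :
  degsum n (amul a b) = \sum_(i < n.+1) degsum i a * degsum (n - i) b.
Proof.
rewrite /degsum /amul (eq_big_seq (fun w => \sum_(i < n.+1) a (take i w) * b (drop i w))); last first.
  by move=> w; rewrite mem_words => /eqP ->.
rewrite exchange_big /=; apply: eq_bigr => i _.
rewrite (big_words_split (fun u v => a u * b v)); last by rewrite -ltnS.
rewrite mulr_suml.
by apply: eq_bigr => u _; rewrite mulr_sumr.
Qed.

Lemma degsum_amulC n a b : degsum n (amul a b) = degsum n (amul b a).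
Proof.
rewrite !degsum_amul (reindex_inj rev_ord_inj); apply: eq_bigr => i _ /=.
by rewrite subSS subKn 1?mulrC // -ltnS.
Qed.

Lemma degsum_inJ f n : inJ f -> degsum n f = 0.
Proof.
move=> Jf; elim: Jf n => {f}
  [F G _ _ _ _ | | f g _ IHf _ IHg | a f _ _ IHf | f a _ _ IHf | f g _ IHf efg] n.
- by rewrite degsumB degsum_amulC subrr.
- exact: big1.
- by rewrite degsumD IHf IHg addr0.
- by rewrite degsum_amul big1 // => i _; rewrite IHf mulr0.
- by rewrite degsum_amul big1 // => i _; rewrite IHf mul0r.
- by rewrite -(IHf n); apply: eq_bigr => w _; rewrite efg.
Qed.

Lemma sim_size X Y : sim X Y -> size X = size Y.
Proof.
move=> /(degsum_inJ (size X)) /eqP.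
rewrite degsumB !degsum_mono eqxx subr_eq0 eq_sym.
by have [//|_] := eqVneq (size Y) (size X); rewrite eq_sym oner_eq0.
Qed.

Theorem corollary3p3 :
  (forall X Y : word, sim X Y -> size X = size Y) /\
  (forall X : word, exists s : seq word, forall Y : word, sim X Y -> Y \in s).
Proof.
split=> [|X]; first exact: sim_size.
by exists (words (size X)) => Y /sim_size ->; rewrite mem_words.
Qed.
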